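(* Let $\{w^k\}$ be generated by the L-GADMM iteration and $\{\bar w^k\}$ be the auxiliary sequence. Then for every $k\ge0$, $$(w^k-\bar w^k)^\top M^\top HM\big\{(w^k-\bar w^k)-(w^{k+1}-\bar w^{k+1})\big\}\ \ge\ \tfrac12\big\|(w^k-\bar w^k)-(w^{k+1}-\bar w^{k+1})\big\|_{Q^\top+Q}^2.$$
   Context: Standing setting. Let $m\ge 2$, $\ell$, $n_1,\dots,n_m$ be positive integers. For $i=1,\dots,m$ let $\theta_i:\mathbb{R}^{n_i}\to\mathbb{R}$ be convex, $\mathcal{X}_i\subseteq\mathbb{R}^{n_i}$ nonempty closed convex, $A_i\in\mathbb{R}^{\ell\times n_i}$ of full column rank, and $b\in\mathbb{R}^\ell$. Problem (P): $\min\{\sum_{i=1}^m\theta_i(x_i):\sum_{i=1}^mA_ix_i=b,\ x_i\in\mathcal{X}_i\}$, assumed to have a nonempty solution set. Write $u=(x_1,\dots,x_m)$, $w=(x_1,\dots,x_m,y)$ with $y\in\mathbb{R}^\ell$, $\theta(u)=\sum_i\theta_i(x_i)$, $F(w)=(-A_1^\top y,\dots,-A_m^\top y,\ \sum_iA_ix_i-b)$, $\mathcal{W}=\mathcal{X}_1\times\cdots\times\mathcal{X}_m\times\mathbb{R}^\ell$, and $\mathcal{W}^*=\{w^*\in\mathcal{W}:\theta(u)-\theta(u^* )+(w-w^* )^\top F(w^* )\ge0\ \forall w\in\mathcal{W}\}$ (nonempty). For symmetric $G$, $\|v\|_G^2:=v^\top Gv$; $\|\cdot\|$ is the Euclidean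 norm. Vectors are partitioned as $w=(R,x_m,y)$ with $R=(x_1,\dots,x_{m-1})$. Parameters: $\rho>0$, $\gamma\in(0,2)$, symmetric positive definite $P_i\in\mathbb{R}^{n_i\times n_i}$ ($i=1,\dots,m$) such that $G_1\succ0$, where $G_1$ is the symmetric block matrix with diagonal blocks $P_1,\dots,P_{m-1}$ and $(i,j)$ block $-\rho A_i^\top A_j$ for $i\ne j$, $1\le i,j\le m-1$. Matrices (w.r.t. the partition $(R,x_m,y)$): $Q=\begin{pmatrix}G_1&0&0\\0&\rho A_m^\top A_m+P_m&(1-\gamma)A_m^\top\\0&-A_m&\frac1\rho I_\ell\end{pmatrix}$, $M=\begin{pmatrix}I&0&0\\0&I_{n_m}&0\\0&-\rho A_m&\gamma I_\ell\end{pmatrix}$, $H=\begin{pmatrix}G_1&0&0\\0&P_m+\frac\rho\gamma A_m^\top A_m&\frac{1-\gamma}\gamma A_m^\top\\0&\frac{1-\gamma}\gamma A_m&\frac1{\gamma\rho}I_\ell\end{pmatrix}$, $N=Q^\top+Q-M^\top HM$. L-GADMM iteration: from an arbitrary $w^0=(x_1^0,\dots,x_m^0,y^0)\in\mathcal{W}$, for $k=0,1,2,\dots$: $x_j^{k+1}=\arg\min_{x_j\in\mathcal{X}_j}\{\theta_j(x_j)+\frac\rho2\|A_jx_j+\sum_{i=1,i\ne j}^mA_ix_i^k-b-\frac{y^k}\rho\|^2+\frac12\|x_j-x_j^k\|_{P_j}^2\}$ for $j=1,\dots,m-1$; $x_m^{k+1}=\arg\min_{x_m\in\mathcal{X}_m}\{\theta_m(x_m)+\frac\rho2\|\gamma\sum_{i=1}^{m-1}A_ix_i^{k+1}+(1-\gamma)(b-A_mx_m^k)+A_mx_m-b-\frac{y^k}\rho\|^2+\frac12\|x_m-x_m^k\|_{P_m}^2\}$;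 $y^{k+1}=y^k-\rho\big(\gamma\sum_{i=1}^{m-1}A_ix_i^{k+1}+(1-\gamma)(b-A_mx_m^k)+A_mx_m^{k+1}-b\big)$. Auxiliary sequence: $\bar w^k=(\bar x_1^k,\dots,\bar x_m^k,\bar y^k)$ with $\bar x_i^k=x_i^{k+1}$ ($i=1,\dots,m$) and $\bar y^k=y^k-\rho(\sum_{i=1}^{m-1}A_ix_i^{k+1}+A_mx_m^k-b)$; $\bar u^k=(\bar x_1^k,\dots,\bar x_m^k)$, $R^k=(x_1^k,\dots,x_{m-1}^k)$, $\bar R^k=(\bar x_1^k,\dots,\bar x_{m-1}^k)$. *)

From HB Require Import structures.
From mathcomp Require Import all_boot all_order all_algebra.
From mathcomp Require Import all_classical all_reals all_analysis.
Set Implicit Arguments. Unset Strict Implicit. Unset Printing Implicit Defensive.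
Import Order.TTheory GRing.Theory Num.Theory.
Import numFieldNormedType.Exports.
Local Open Scope ring_scope.
Local Open Scope classical_set_scope.

(* Block layout: the first m-1 blocks are indexed by i : 'I_p (p = m-1 >= 1),
   block i has dimension n i; the last block x_m has dimension nm; y has dim l. *)

Definition sqn {R : realType} {k : nat} (v : 'cV[R]_k) : R := (v^T *m v) 0 0.
Definition qf {R : realType} {k : nat} (G : 'M[R]_k) (v : 'cV[R]_k) : R :=
  (v^T *m G *m v) 0 0.
Definition bf {R : realType} {k : nat} (u : 'cV[R]_k) (G : 'M[R]_k) (v : 'cV[R]_k) : R :=
  (u^T *m G *m v) 0 0.

Definition cvx_fun {R : realType} {k : nat} (f : 'cV[R]_k -> R) : Prop :=
  forall (x y : 'cV[R]_k) (t : R), 0 <= t <= 1 ->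
    f (t *: x + (1 - t) *: y) <= t * f x + (1 - t) * f y.
Definition cvx_set {R : realType} {k : nat} (X : set 'cV[R]_k) : Prop :=
  forall (x y : 'cV[R]_k) (t : R), X x -> X y -> 0 <= t <= 1 ->
    X (t *: x + (1 - t) *: y).

Definition sym_mx {R : realType} {k : nat} (G : 'M[R]_k) : Prop := G^T = G.
Definition posdef {R : realType} {k : nat} (G : 'M[R]_k) : Prop :=
  forall v : 'cV[R]_k, v != 0 -> 0 < qf G v.

Definition Acat {R : realType} {p l : nat} {n : 'I_p -> nat}
  (A : forall i : 'I_p, 'M[R]_(l, n i)) : 'M[R]_(l, \sum_(i < p) n i) :=
  \mxrow_(i < p) A i.

Definition Rvec {R : realType} {p : nat} {n : 'I_p -> nat}
  (x : forall i : 'I_p, 'cV[R]_(n i)) : 'cV[R]_(\sum_(i < p) n i) :=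
  \mxcol_(i < p) x i.

Definition wvec {R : realType} {p nm l : nat} {n : 'I_p -> nat}
  (x : forall i : 'I_p, 'cV[R]_(n i)) (xm : 'cV[R]_nm) (y : 'cV[R]_l)
  : 'cV[R]_((\sum_(i < p) n i + nm) + l) :=
  col_mx (col_mx (Rvec x) xm) y.

(* G_1 : block matrix with diagonal blocks P_i and (i,j) blocks -rho A_i^T A_j, i<>j.
   Written as  diag(P_i) - rho (Acat^T Acat - diag(A_i^T A_i)). *)
Definition G1mx {R : realType} {p l : nat} {n : 'I_p -> nat} (rho : R)
  (P : forall i : 'I_p, 'M[R]_(n i)) (A : forall i : 'I_p, 'M[R]_(l, n i))
  : 'M[R]_(\sum_(i < p) n i) :=
  \mxdiag_(i < p) P i
  - rho *: ((Acat A)^T *m Acat A - \mxdiag_(i < p) ((A i)^T *m A i)).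

Definition Qmx {R : realType} {p nm l : nat} {n : 'I_p -> nat} (rho gam : R)
  (P : forall i : 'I_p, 'M[R]_(n i)) (Pm : 'M[R]_nm)
  (A : forall i : 'I_p, 'M[R]_(l, n i)) (Am : 'M[R]_(l, nm))
  : 'M[R]_((\sum_(i < p) n i + nm) + l) :=
  block_mx (block_mx (G1mx rho P A) 0 0 (rho *: (Am^T *m Am) + Pm))
           (col_mx 0 ((1 - gam) *: Am^T))
           (row_mx 0 (- Am))
           (rho^-1 *: 1%:M).

Definition Mmx {R : realType} {p nm l : nat} {n : 'I_p -> nat} (rho gam : R)
  (Am : 'M[R]_(l, nm)) : 'M[R]_((\sum_(i < p) n i + nm) + l) :=
  block_mx (block_mx 1%:M 0 0 1%:M) 0
           (row_mx (0 : 'M[R]_(l, \sum_(i < p) n i)) (- (rho *: Am)))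
           (gam *: 1%:M).

Definition Hmx {R : realType} {p nm l : nat} {n : 'I_p -> nat} (rho gam : R)
  (P : forall i : 'I_p, 'M[R]_(n i)) (Pm : 'M[R]_nm)
  (A : forall i : 'I_p, 'M[R]_(l, n i)) (Am : 'M[R]_(l, nm))
  : 'M[R]_((\sum_(i < p) n i + nm) + l) :=
  block_mx (block_mx (G1mx rho P A) 0 0 (Pm + (rho / gam) *: (Am^T *m Am)))
           (col_mx 0 (((1 - gam) / gam) *: Am^T))
           (row_mx 0 (((1 - gam) / gam) *: Am))
           ((gam * rho)^-1 *: 1%:M).

Definition theta_u {R : realType} {p nm : nat} {n : 'I_p -> nat}
  (th : forall i : 'I_p, 'cV[R]_(n i) -> R) (thm : 'cV[R]_nm -> R)
  (x : forall i : 'I_p, 'cV[R]_(n i)) (xm : 'cV[R]_nm) : R :=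
  \sum_(i < p) th i (x i) + thm xm.

Definition Fmap {R : realType} {p nm l : nat} {n : 'I_p -> nat}
  (A : forall i : 'I_p, 'M[R]_(l, n i)) (Am : 'M[R]_(l, nm)) (b : 'cV[R]_l)
  (x : forall i : 'I_p, 'cV[R]_(n i)) (xm : 'cV[R]_nm) (y : 'cV[R]_l)
  : 'cV[R]_((\sum_(i < p) n i + nm) + l) :=
  col_mx (col_mx (- ((Acat A)^T *m y)) (- (Am^T *m y)))
         (\sum_(i < p) A i *m x i + Am *m xm - b).

Definition in_Wstar {R : realType} {p nm l : nat} {n : 'I_p -> nat}
  (th : forall i : 'I_p, 'cV[R]_(n i) -> R) (thm : 'cV[R]_nm -> R)
  (X : forall i : 'I_p, set 'cV[R]_(n i)) (Xm : set 'cV[R]_nm)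
  (A : forall i : 'I_p, 'M[R]_(l, n i)) (Am : 'M[R]_(l, nm)) (b : 'cV[R]_l)
  (xs : forall i : 'I_p, 'cV[R]_(n i)) (xms : 'cV[R]_nm) (ys : 'cV[R]_l) : Prop :=
  (forall i, X i (xs i)) /\ Xm xms /\
  forall (x : forall i : 'I_p, 'cV[R]_(n i)) (xm : 'cV[R]_nm) (y : 'cV[R]_l),
    (forall i, X i (x i)) -> Xm xm ->
    0 <= theta_u th thm x xm - theta_u th thm xs xms
         + ((wvec x xm y - wvec xs xms ys)^T *m Fmap A Am b xs xms ys) 0 0.

Definition feasibleP {R : realType} {p nm l : nat} {n : 'I_p -> nat}
  (X : forall i : 'I_p, set 'cV[R]_(n i)) (Xm : set 'cV[R]_nm)
  (A : forall i : 'I_p, 'M[R]_(l, n i)) (Am : 'M[R]_(l, nm)) (b : 'cV[R]_l)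
  (x : forall i : 'I_p, 'cV[R]_(n i)) (xm : 'cV[R]_nm) : Prop :=
  (forall i, X i (x i)) /\ Xm xm /\ \sum_(i < p) A i *m x i + Am *m xm = b.

Definition solvesP {R : realType} {p nm l : nat} {n : 'I_p -> nat}
  (th : forall i : 'I_p, 'cV[R]_(n i) -> R) (thm : 'cV[R]_nm -> R)
  (X : forall i : 'I_p, set 'cV[R]_(n i)) (Xm : set 'cV[R]_nm)
  (A : forall i : 'I_p, 'M[R]_(l, n i)) (Am : 'M[R]_(l, nm)) (b : 'cV[R]_l)
  (xs : forall i : 'I_p, 'cV[R]_(n i)) (xms : 'cV[R]_nm) : Prop :=
  feasibleP X Xm A Am b xs xms /\
  forall x xm, feasibleP X Xm A Am b x xm ->
    theta_u th thm xs xms <= theta_u th thm x xm.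

Definition obj_j {R : realType} {p nm l : nat} {n : 'I_p -> nat}
  (th : forall i : 'I_p, 'cV[R]_(n i) -> R)
  (A : forall i : 'I_p, 'M[R]_(l, n i)) (Am : 'M[R]_(l, nm)) (b : 'cV[R]_l)
  (rho : R) (P : forall i : 'I_p, 'M[R]_(n i))
  (xk : forall i : 'I_p, 'cV[R]_(n i)) (xmk : 'cV[R]_nm) (yk : 'cV[R]_l)
  (j : 'I_p) (z : 'cV[R]_(n j)) : R :=
  th j z
  + rho / 2 * sqn (A j *m z + (\sum_(i < p | i != j) A i *m xk i + Am *m xmk)
                   - b - rho^-1 *: yk)
  + 1 / 2 * qf (P j) (z - xk j).

(* objective of the x_m-subproblem; xk1 = x^{k+1}_{1..m-1} *)
Definition obj_m {R : realType} {p nm l : nat} {n : 'I_p -> nat}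
  (thm : 'cV[R]_nm -> R)
  (A : forall i : 'I_p, 'M[R]_(l, n i)) (Am : 'M[R]_(l, nm)) (b : 'cV[R]_l)
  (rho gam : R) (Pm : 'M[R]_nm)
  (xk1 : forall i : 'I_p, 'cV[R]_(n i)) (xmk : 'cV[R]_nm) (yk : 'cV[R]_l)
  (z : 'cV[R]_nm) : R :=
  thm z
  + rho / 2 * sqn (gam *: \sum_(i < p) A i *m xk1 i + (1 - gam) *: (b - Am *m xmk)
                   + Am *m z - b - rho^-1 *: yk)
  + 1 / 2 * qf Pm (z - xmk).

(* the L-GADMM iteration, as a relation on the generated sequences:
   each x-update is a minimizer of the corresponding subproblem over its set *)
Definition LGADMM {R : realType} {p nm l : nat} {n : 'I_p -> nat}
  (th : forall i : 'I_p, 'cV[R]_(n i) -> R) (thm : 'cV[R]_nm -> R)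
  (X : forall i : 'I_p, set 'cV[R]_(n i)) (Xm : set 'cV[R]_nm)
  (A : forall i : 'I_p, 'M[R]_(l, n i)) (Am : 'M[R]_(l, nm)) (b : 'cV[R]_l)
  (rho gam : R) (P : forall i : 'I_p, 'M[R]_(n i)) (Pm : 'M[R]_nm)
  (x : nat -> forall i : 'I_p, 'cV[R]_(n i)) (xm : nat -> 'cV[R]_nm)
  (y : nat -> 'cV[R]_l) : Prop :=
  [/\ (forall i, X i (x 0%N i)), Xm (xm 0%N),
      (forall (k : nat) (j : 'I_p), X j (x k.+1 j) /\
         forall z, X j z ->
           obj_j th A Am b rho P (x k) (xm k) (y k) (x k.+1 j)
           <= obj_j th A Am b rho P (x k) (xm k) (y k) z),
      (forall k : nat, Xm (xm k.+1) /\
         forall z, Xm z ->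
           obj_m thm A Am b rho gam Pm (x k.+1) (xm k) (y k) (xm k.+1)
           <= obj_m thm A Am b rho gam Pm (x k.+1) (xm k) (y k) z) &
      (forall k : nat, y k.+1 = y k - rho *: (gam *: \sum_(i < p) A i *m x k.+1 i
                         + (1 - gam) *: (b - Am *m xm k) + Am *m xm k.+1 - b))].

Definition wbar {R : realType} {p nm l : nat} {n : 'I_p -> nat}
  (A : forall i : 'I_p, 'M[R]_(l, n i)) (Am : 'M[R]_(l, nm)) (b : 'cV[R]_l) (rho : R)
  (x : nat -> forall i : 'I_p, 'cV[R]_(n i)) (xm : nat -> 'cV[R]_nm)
  (y : nat -> 'cV[R]_l) (k : nat) : 'cV[R]_((\sum_(i < p) n i + nm) + l) :=
  wvec (x k.+1) (xm k.+1)
       (y k - rho *: (\sum_(i < p) A i *m x k.+1 i + Am *m xm k - b)).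

From HB Require Import structures.
From mathcomp Require Import all_boot all_order all_algebra.
From mathcomp Require Import all_classical all_reals all_analysis.
From mathcomp Require Import ring lra.
Set Implicit Arguments. Unset Strict Implicit. Unset Printing Implicit Defensive.
Import Order.TTheory GRing.Theory Num.Theory.
Import numFieldNormedType.Exports.
Local Open Scope ring_scope.
Local Open Scope classical_set_scope.

(** The x-updates are proximal steps, so their first-order optimality
    conditions say that the predictor [w̄^k] satisfies the variational
    inequality
      θ(u) - θ(ū^k) + (w - w̄^k)ᵀ F(w̄^k) >= (w - w̄^k)ᵀ Q (w^k - w̄^k)   on W,
    while the y-update is the correction  w^{k+1} = w^k - M (w^k - w̄^k).
    Testing the inequality at step k with w = w̄^{k+1} and at step k+1 with
    w = w̄^k, and adding, the θ-terms cancel and so do the F-terms (F is affine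
    with skew-symmetric linear part); with d_k = w^k - w̄^k this leaves
      (w̄^k - w̄^{k+1})ᵀ Q (d_k - d_{k+1}) >= 0.
    Finally H M = Q and M d_k = (d_k - d_{k+1}) + (w̄^k - w̄^{k+1}), so
      d_kᵀ Mᵀ H M (d_k - d_{k+1})
        = (d_k - d_{k+1})ᵀ Q (d_k - d_{k+1}) + (w̄^k - w̄^{k+1})ᵀ Q (d_k - d_{k+1}),
    and the first term is ½‖d_k - d_{k+1}‖²_{Qᵀ+Q}. *)

Section InnerProduct.
Variable R : comPzRingType.

Definition ip {k : nat} (u v : 'cV[R]_k) : R := (u^T *m v) 0 0.

Lemma ipC k (u v : 'cV[R]_k) : ip u v = ip v u.
Proof. by rewrite /ip -[in LHS](trmxK (u^T *m v)) mxE trmx_mul trmxK. Qed.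

Lemma ipDr k (u v w : 'cV[R]_k) : ip u (v + w) = ip u v + ip u w.
Proof. by rewrite /ip mulmxDr mxE. Qed.

Lemma ipDl k (u v w : 'cV[R]_k) : ip (v + w) u = ip v u + ip w u.
Proof. by rewrite ipC ipDr !(ipC u). Qed.

Lemma ipNr k (u v : 'cV[R]_k) : ip u (- v) = - ip u v.
Proof. by rewrite /ip mulmxN mxE. Qed.

Lemma ipNl k (u v : 'cV[R]_k) : ip (- v) u = - ip v u.
Proof. by rewrite ipC ipNr ipC. Qed.

Lemma ipBr k (u v w : 'cV[R]_k) : ip u (v - w) = ip u v - ip u w.
Proof. by rewrite ipDr ipNr. Qed.

Lemma ipZr k a (u v : 'cV[R]_k) : ip u (a *: v) = a * ip u v.
Proof. by rewrite /ip -scalemxAr mxE. Qed.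

Lemma ipZl k a (u v : 'cV[R]_k) : ip (a *: v) u = a * ip v u.
Proof. by rewrite ipC ipZr ipC. Qed.

Lemma ip_mulmxr k m (u : 'cV[R]_k) (C : 'M[R]_(k, m)) (v : 'cV[R]_m) :
  ip u (C *m v) = ip (C^T *m u) v.
Proof. by rewrite /ip trmx_mul trmxK mulmxA. Qed.

Lemma ip_col_mx k1 k2 (u1 v1 : 'cV[R]_k1) (u2 v2 : 'cV[R]_k2) :
  ip (col_mx u1 u2) (col_mx v1 v2) = ip u1 v1 + ip u2 v2.
Proof. by rewrite /ip tr_col_mx mul_row_col mxE. Qed.

Lemma ip_mxcol p (n : 'I_p -> nat) (u v : forall i, 'cV[R]_(n i)) :
  ip (\mxcol_i u i) (\mxcol_i v i) = \sum_i ip (u i) (v i).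
Proof. by rewrite /ip tr_mxcol mul_mxrow_mxcol summxE. Qed.

End InnerProduct.

Section QuadraticForms.
Variable R : realType.

Lemma bf_mulmx k m (u v : 'cV[R]_k) (B C : 'M[R]_(m, k)) :
  bf u (B^T *m C) v = ip (B *m u) (C *m v).
Proof. by rewrite /bf /ip trmx_mul !mulmxA. Qed.

Lemma qf_ip k (G : 'M[R]_k) (v : 'cV[R]_k) : qf G v = ip v (G *m v).
Proof. by rewrite /qf /ip mulmxA. Qed.

Lemma qf_symmetrize k (G : 'M[R]_k) (v : 'cV[R]_k) :
  qf (G^T + G) v = 2 * ip v (G *m v).
Proof. by rewrite qf_ip mulmxDl ipDr ip_mulmxr trmxK ipC; ring. Qed.

Lemma qfDZ k (G : 'M[R]_k) (u h : 'cV[R]_k) (t : R) : sym_mx G ->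
  qf G (u + t *: h) = qf G u + 2 * t * ip u (G *m h) + t ^+ 2 * qf G h.
Proof.
move=> symG; have Gsym : ip h (G *m u) = ip u (G *m h).
  by rewrite ip_mulmxr symG ipC.
by rewrite !qf_ip mulmxDr -scalemxAr !(ipDl, ipDr, ipZl, ipZr) Gsym; ring.
Qed.

Lemma sqnDZ k (u h : 'cV[R]_k) (t : R) :
  sqn (u + t *: h) = sqn u + 2 * t * ip u h + t ^+ 2 * sqn h.
Proof.
have sqn_qf (v : 'cV[R]_k) : sqn v = qf 1%:M v by rewrite /sqn /qf mulmx1.
by rewrite !sqn_qf qfDZ ?mul1mx // /sym_mx trmx1.
Qed.

End QuadraticForms.

Lemma linear_coef_ge0 (R : realFieldType) (a b : R) :
  (forall t, 0 < t <= 1 -> 0 <= t * a + t ^+ 2 * b) -> 0 <= a.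
Proof.
move=> H; case: (lerP 0 a) => // ha.
(* With t = -a / (|b| - a) we get t a + t^2 b <= t (a + t |b|) < 0. *)
have hD : 0 < `|b| - a by have := normr_ge0 b; lra.
set t := - a / (`|b| - a).
have ht : 0 < t <= 1.
  apply/andP; split; first by rewrite /t divr_gt0 //; lra.
  by rewrite /t ler_pdivrMr //; have := normr_ge0 b; lra.
have := H t ht.
have -> : t * a + t ^+ 2 * b = a ^+ 2 * (b - `|b| + a) / (`|b| - a) ^+ 2.
  by rewrite /t; field; rewrite gt_eqF.
have hb : b <= `|b| by apply: ler_norm.
have : a ^+ 2 * (b - `|b| + a) / (`|b| - a) ^+ 2 < 0.
  rewrite pmulr_llt0 ?invr_gt0 ?exprn_gt0 //.
  rewrite pmulr_rlt0; first lra.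
  by rewrite exprn_even_gt0 //= lt_eqF.
lra.
Qed.

Lemma prox_argmin_vi (R : realType) k m (f : 'cV[R]_k -> R) (X : set 'cV[R]_k)
    (C : 'M[R]_(m, k)) (c : 'cV[R]_m) (rho : R) (P : 'M[R]_k) (z0 zs : 'cV[R]_k)
    (phi : 'cV[R]_k -> R) :
  cvx_fun f -> cvx_set X -> sym_mx P ->
  phi =1 (fun z => f z + rho / 2 * sqn (C *m z + c) + 1 / 2 * qf P (z - z0)) ->
  X zs -> (forall z, X z -> phi zs <= phi z) ->
  forall z, X z ->
    0 <= f z - f zs + ip (z - zs) (rho *: (C^T *m (C *m zs + c)) + P *m (zs - z0)).
Proof.
move=> cvx_f cvx_X symP phiE Xzs zs_min z Xz.
set h := z - zs; set v := C *m zs + c; set u := zs - z0.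
have gradE : ip h (rho *: (C^T *m v) + P *m u) = rho * ip v (C *m h) + ip u (P *m h).
  by rewrite ipDr ipZr ip_mulmxr trmxK ipC [ip h _]ip_mulmxr symP [ip (P *m h) _]ipC.
(* Compare phi at zs and at zs + t h: the difference is linear plus quadratic in t. *)
rewrite gradE; apply: (@linear_coef_ge0 _ _ (rho / 2 * sqn (C *m h) + 1 / 2 * qf P h)).
move=> t /andP[t_gt0 t_le1]; have t01 : 0 <= t <= 1 by rewrite ltW.
have zsthE : t *: z + (1 - t) *: zs = zs + t *: h.
  by apply/matrixP => i j; rewrite !mxE; ring.
have f_le := cvx_f z zs t t01; rewrite zsthE in f_le.
have phi_le := zs_min _ (cvx_X _ _ _ Xz Xzs t01); rewrite zsthE !phiE in phi_le.
rewrite mulmxDr -scalemxAr [C *m zs + _ + c]addrAC sqnDZ in phi_le.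
rewrite [zs + _ - z0]addrAC qfDZ // in phi_le.
lra.
Qed.

Lemma vi_pair_monotone (R : realType) k (u0 u1 F0 F1 v0 v1 : 'cV[R]_k) (t0 t1 : R) :
  ip (u1 - u0) v0 <= t1 - t0 + ip (u1 - u0) F0 ->
  ip (u0 - u1) v1 <= t0 - t1 + ip (u0 - u1) F1 ->
  0 <= ip (u0 - u1) (F0 - F1) ->
  0 <= ip (u0 - u1) (v0 - v1).
Proof. by rewrite -opprB !ipNl !ipBr; lra. Qed.

Lemma scale_mxcol (R : pzRingType) p (n : 'I_p -> nat) m (a : R)
    (u : forall i, 'M[R]_(n i, m)) :
  a *: \mxcol_i u i = \mxcol_i (a *: u i).
Proof. by apply/matrixP => i j; rewrite !mxE. Qed.

Section BlockMatrices.
Variables (R : realType) (p : nat) (n : 'I_p -> nat) (nm l : nat).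
Variables (A : forall i : 'I_p, 'M[R]_(l, n i)) (Am : 'M[R]_(l, nm)).
Variables (P : forall i : 'I_p, 'M[R]_(n i)) (Pm : 'M[R]_nm) (rho gam : R).

Lemma Acat_mul_Rvec (v : forall i, 'cV[R]_(n i)) :
  Acat A *m Rvec v = \sum_i A i *m v i.
Proof. exact: mul_mxrow_mxcol. Qed.

Lemma trAcat_mul (z : 'cV[R]_l) : (Acat A)^T *m z = \mxcol_i ((A i)^T *m z).
Proof. by rewrite tr_mxrow mxcol_mul. Qed.

Lemma G1mx_mul_Rvec (v : forall i, 'cV[R]_(n i)) :
  G1mx rho P A *m Rvec v
  = \mxcol_i (P i *m v i - rho *: ((A i)^T *m (\sum_j A j *m v j - A i *m v i))).
Proof.
rewrite /G1mx mulmxBl -scalemxAl mulmxBl !mul_mxdiag_mxcol -mulmxA.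
rewrite Acat_mul_Rvec trAcat_mul -mxcolB scale_mxcol -mxcolB.
by apply: eq_mxcol => i; rewrite mulmxBr mulmxA.
Qed.

Lemma Qmx_mul (u : 'cV[R]_(\sum_i n i)) (v : 'cV[R]_nm) (z : 'cV[R]_l) :
  Qmx rho gam P Pm A Am *m col_mx (col_mx u v) z
  = col_mx (col_mx (G1mx rho P A *m u)
                   ((rho *: (Am^T *m Am) + Pm) *m v + ((1 - gam) *: Am^T) *m z))
           (- (Am *m v) + rho^-1 *: z).
Proof.
rewrite /Qmx mul_block_col mul_block_col mul_col_mx mul_row_col.
by rewrite !(mul0mx, addr0, add0r) add_col_mx addr0 mulNmx scalemx1 mul_scalar_mx.
Qed.

Lemma Mmx_mul (u : 'cV[R]_(\sum_i n i)) (v : 'cV[R]_nm) (z : 'cV[R]_l) :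
  Mmx (n := n) rho gam Am *m col_mx (col_mx u v) z
  = col_mx (col_mx u v) (- (rho *: (Am *m v)) + gam *: z).
Proof.
rewrite /Mmx mul_block_col -scalar_mx_block mul1mx mul0mx addr0.
by rewrite mul_row_col mul0mx add0r mulNmx -!scalemxAl mul1mx.
Qed.

Lemma Hmx_mul_Mmx : rho != 0 -> gam != 0 ->
  Hmx rho gam P Pm A Am *m Mmx (n := n) rho gam Am = Qmx rho gam P Pm A Am.
Proof.
move=> rho0 gam0.
rewrite /Hmx /Mmx /Qmx mulmx_block -scalar_mx_block !mulmx1 !mulmx0 !add0r.
rewrite mul_col_row mul_col_mx !mul0mx add_block_mx !(addr0, add0r).
congr block_mx.
- congr block_mx; first by rewrite mulmx0.
  rewrite mulmxN -!scalemxAl -!scalemxAr.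
  by apply/matrixP => i j; rewrite !mxE; field.
- congr col_mx; rewrite -scalemxAl -scalemxAr mulmx1 scalerA; congr (_ *: _).
  by field.
- rewrite -scalemxAl mul1mx scale_row_mx scaler0 add_row_mx addr0.
  by congr row_mx; apply/matrixP => i j; rewrite !mxE; field; apply/andP.
- rewrite -scalemxAl -scalemxAr mul1mx scalerA; congr (_ *: _).
  by field; apply/andP.
Qed.

Lemma Fmap_skew (b : 'cV[R]_l) x1 xm1 y1 x2 xm2 y2 :
  ip (wvec x1 xm1 y1 - wvec x2 xm2 y2)
     (Fmap A Am b x1 xm1 y1 - Fmap A Am b x2 xm2 y2) = 0.
Proof.
rewrite /wvec /Fmap -!Acat_mul_Rvec !opp_col_mx !add_col_mx !ip_col_mx.
rewrite !(ipDr, ipNr, ipBr) ![ip _ (_^T *m _)]ip_mulmxr !trmxK.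
rewrite ![ip (y1 - y2) _]ipC !(mulmxBr, ipDl, ipNl, ipNr, ipDr, ipBr).
lra.
Qed.

End BlockMatrices.

Section LGADMMIteration.
(* Keep the block index explicit in [th i], [X i], [P i] and in the hypotheses. *)
Unset Implicit Arguments.
Context {R : realType} {p : nat} {n : 'I_p -> nat} {nm l : nat}.
Context {th : forall i : 'I_p, 'cV[R]_(n i) -> R} {thm : 'cV[R]_nm -> R}.
Context {X : forall i : 'I_p, set 'cV[R]_(n i)} {Xm : set 'cV[R]_nm}.
Context {A : forall i : 'I_p, 'M[R]_(l, n i)} {Am : 'M[R]_(l, nm)} {b : 'cV[R]_l}.
Context {rho gam : R} {P : forall i : 'I_p, 'M[R]_(n i)} {Pm : 'M[R]_nm}.
Context {x : nat -> forall i : 'I_p, 'cV[R]_(n i)} {xm : nat -> 'cV[R]_nm}.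
Context {y : nat -> 'cV[R]_l}.

Hypothesis iter : LGADMM th thm X Xm A Am b rho gam P Pm x xm y.

Let ybar k := y k - rho *: (\sum_i A i *m x k.+1 i + Am *m xm k - b).
Let w k := wvec (x k) (xm k) (y k).
Let wb k := wbar A Am b rho x xm y k.
Let d k := w k - wb k.

Lemma dE k :
  d k = col_mx (col_mx (Rvec (x k) - Rvec (x k.+1)) (xm k - xm k.+1)) (y k - ybar k).
Proof. by rewrite /d /w /wb /wbar /wvec !opp_col_mx !add_col_mx. Qed.

Lemma y_update k :
  y k.+1 = ybar k + rho *: (Am *m (xm k - xm k.+1)) + (1 - gam) *: (y k - ybar k).
Proof.
have [_ _ _ _ yE] := iter; rewrite yE /ybar !mulmxBr.
by apply/matrixP => i j; rewrite !mxE; ring.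
Qed.

Lemma lgadmm_correction k : w k.+1 = w k - Mmx (n := n) rho gam Am *m d k.
Proof.
rewrite dE Mmx_mul /w /wvec !opp_col_mx !add_col_mx !opprB !subrKC y_update.
by congr col_mx; apply/matrixP => i j; rewrite !mxE; ring.
Qed.

Hypothesis rho_neq0 : rho != 0.
Hypotheses (cvx_th : forall i : 'I_p, cvx_fun (th i)) (cvx_X : forall i : 'I_p, cvx_set (X i)).
Hypothesis sym_P : forall i : 'I_p, sym_mx (P i).
Hypotheses (cvx_thm : cvx_fun thm) (cvx_Xm : cvx_set Xm) (sym_Pm : sym_mx Pm).
Set Implicit Arguments.

Lemma x_update_vi k (z : forall i, 'cV[R]_(n i)) : (forall i, X i (z i)) ->
  0 <= \sum_i (th i (z i) - th i (x k.+1 i))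
       + ip (Rvec z - Rvec (x k.+1))
            (- ((Acat A)^T *m ybar k) - G1mx rho P A *m (Rvec (x k) - Rvec (x k.+1))).
Proof.
move=> Xz; have [_ _ x_opt _ _] := iter.
rewrite /Rvec -!mxcolB G1mx_mul_Rvec trAcat_mul -mxcolN -mxcolB.
rewrite ip_mxcol -big_split /=.
apply: sumr_ge0 => i _.
pose c := \sum_(j | j != i) A j *m x k j + Am *m xm k - b - rho^-1 *: y k.
have gradE : - ((A i)^T *m ybar k) - (P i *m (x k i - x k.+1 i)
      - rho *: ((A i)^T *m (\sum_j A j *m (x k j - x k.+1 j) - A i *m (x k i - x k.+1 i))))
    = rho *: ((A i)^T *m (A i *m x k.+1 i + c)) + P i *m (x k.+1 i - x k i).
  rewrite (eq_bigr _ (fun j _ => mulmxBr (A j) (x k j) (x k.+1 j))) sumrB (bigD1 i) //=.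
  rewrite /ybar /c; set S := \sum_(j | j != i) _; set S1 := \sum_j _.
  rewrite !(mulmxDr, mulmxBr, mulmxN, scalerDr, scalerBr, scalerN) -!scalemxAr !mulmxA.
  by apply/matrixP => a e; rewrite !mxE; field.
rewrite gradE; have [Xx x_min] := x_opt k i.
apply: (prox_argmin_vi (cvx_th i) (cvx_X i) (sym_P i) _ Xx x_min (Xz i)).
by move=> z'; rewrite /obj_j /c !addrA.
Qed.

Lemma xm_update_vi k zm : Xm zm ->
  0 <= thm zm - thm (xm k.+1)
       + ip (zm - xm k.+1) (- (Am^T *m ybar k) - (rho *: (Am^T *m Am) + Pm) *m (xm k - xm k.+1)
                            - ((1 - gam) *: Am^T) *m (y k - ybar k)).
Proof.
move=> Xzm; have [_ _ _ xm_opt _] := iter.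
pose c := gam *: \sum_i A i *m x k.+1 i + (1 - gam) *: (b - Am *m xm k) - b - rho^-1 *: y k.
have gradE : - (Am^T *m ybar k) - (rho *: (Am^T *m Am) + Pm) *m (xm k - xm k.+1)
      - ((1 - gam) *: Am^T) *m (y k - ybar k)
    = rho *: (Am^T *m (Am *m xm k.+1 + c)) + Pm *m (xm k.+1 - xm k).
  rewrite /ybar /c; set S1 := \sum_i _.
  rewrite !(mulmxDr, mulmxBr, mulmxN, mulmxDl, mulNmx, scalerDr, scalerBr, scalerN).
  rewrite -!scalemxAr -!scalemxAl !mulmxA.
  by apply/matrixP => a e; rewrite !mxE; field.
rewrite gradE; have [Xxm xm_min] := xm_opt k.
apply: (prox_argmin_vi cvx_thm cvx_Xm sym_Pm _ Xxm xm_min Xzm).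
move=> z'; rewrite /obj_m /c; congr (_ + _ * sqn _ + _).
by apply/matrixP => a e; rewrite !mxE; ring.
Qed.

Lemma feasibility_residual k :
  \sum_i A i *m x k.+1 i + Am *m xm k.+1 - b
  = - (Am *m (xm k - xm k.+1)) + rho^-1 *: (y k - ybar k).
Proof.
rewrite /ybar opprB subrKC scalerA mulVf // scale1r mulmxBr.
by apply/matrixP => a e; rewrite !mxE; ring.
Qed.

Lemma wbar_vi k z zm yy : (forall i, X i (z i)) -> Xm zm ->
  ip (wvec z zm yy - wb k) (Qmx rho gam P Pm A Am *m d k)
  <= theta_u th thm z zm - theta_u th thm (x k.+1) (xm k.+1)
     + ip (wvec z zm yy - wb k) (Fmap A Am b (x k.+1) (xm k.+1) (ybar k)).
Proof.
move=> Xz Xzm; have := x_update_vi k Xz; have := xm_update_vi k Xzm.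
rewrite dE Qmx_mul /Fmap feasibility_residual /wb /wbar /wvec -/(ybar k).
rewrite !opp_col_mx !add_col_mx !ip_col_mx /theta_u sumrB !(ipDr, ipBr, ipNr).
lra.
Qed.

Lemma wbar_Q_monotone k :
  0 <= ip (wb k - wb k.+1) (Qmx rho gam P Pm A Am *m (d k - d k.+1)).
Proof.
have [_ _ x_opt xm_opt _] := iter.
have wbE0 : wvec (x k.+1) (xm k.+1) (ybar k) = wb k by [].
have wbE1 : wvec (x k.+2) (xm k.+2) (ybar k.+1) = wb k.+1 by [].
have vi_k := wbar_vi k (ybar k.+1) (fun i => (x_opt k.+1 i).1) (xm_opt k.+1).1.
have vi_k1 := wbar_vi k.+1 (ybar k) (fun i => (x_opt k i).1) (xm_opt k).1.
have skew := Fmap_skew A Am b (x k.+1) (xm k.+1) (ybar k) (x k.+2) (xm k.+2) (ybar k.+1).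
rewrite wbE1 in vi_k; rewrite wbE0 in vi_k1; rewrite wbE0 wbE1 in skew.
by rewrite mulmxBr; apply: (vi_pair_monotone vi_k vi_k1); rewrite skew.
Qed.

End LGADMMIteration.

Theorem lemma4p3 (R : realType) (p : nat) (n : 'I_p -> nat) (nm l : nat)
  (th : forall i : 'I_p, 'cV[R]_(n i) -> R) (thm : 'cV[R]_nm -> R)
  (X : forall i : 'I_p, set 'cV[R]_(n i)) (Xm : set 'cV[R]_nm)
  (A : forall i : 'I_p, 'M[R]_(l, n i)) (Am : 'M[R]_(l, nm)) (b : 'cV[R]_l)
  (rho gam : R) (P : forall i : 'I_p, 'M[R]_(n i)) (Pm : 'M[R]_nm)
  (x : nat -> forall i : 'I_p, 'cV[R]_(n i)) (xm : nat -> 'cV[R]_nm)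
  (y : nat -> 'cV[R]_l) :
  (1 <= p)%N ->
  (forall i, 0 < n i)%N -> (0 < nm)%N -> (0 < l)%N ->
  (forall i, cvx_fun (th i)) -> cvx_fun thm ->
  (forall i, X i !=set0 /\ closed (X i) /\ cvx_set (X i)) ->
  Xm !=set0 -> closed Xm -> cvx_set Xm ->
  (forall i, \rank (A i) = n i) -> \rank Am = nm ->
  (exists xs xms, solvesP th thm X Xm A Am b xs xms) ->
  (exists xs xms ys, in_Wstar th thm X Xm A Am b xs xms ys) ->
  0 < rho -> 0 < gam < 2 ->
  (forall i, sym_mx (P i) /\ posdef (P i)) -> sym_mx Pm -> posdef Pm ->
  posdef (G1mx rho P A) ->
  LGADMM th thm X Xm A Am b rho gam P Pm x xm y ->
  forall k : nat,
    let d := fun j : nat => wvec (x j) (xm j) (y j) - wbar A Am b rho x xm y j in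
    let Q := Qmx rho gam P Pm A Am in
    let M := Mmx (n := n) rho gam Am in
    let H := Hmx rho gam P Pm A Am in
    bf (d k) (M^T *m H *m M) (d k - d k.+1)
    >= 1 / 2 * qf (Q^T + Q) (d k - d k.+1).
Proof.
move=> _ _ _ _ cvx_th cvx_thm cX _ _ cvx_Xm _ _ _ _ rho_gt0 gam_bnd PP sym_Pm _ _ iter k.
cbv zeta; set d := fun j : nat => _; set e := d k - d k.+1.
set Q := Qmx _ _ _ _ _ _; set M := Mmx _ _ _; set H := Hmx _ _ _ _ _ _.
have rho0 : rho != 0 by rewrite gt_eqF.
have gam0 : gam != 0 by case/andP: gam_bnd => gam_gt0 _; rewrite gt_eqF.
have cvx_X i : cvx_set (X i) by have [_ []] := cX i.
have sym_P i : sym_mx (P i) by have [] := PP i.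
have Md : M *m d k
          = e + (wbar A Am b rho x xm y k - wbar A Am b rho x xm y k.+1).
  rewrite /e /d /= (lgadmm_correction iter k) -/M.
  move: (wvec (x k) _ _) (wbar _ _ _ _ _ _ _ k) (wbar _ _ _ _ _ _ _ k.+1) => w0 b0 b1.
  by move: (M *m (w0 - b0)) => a; apply/matrixP => i j; rewrite !mxE; ring.
have mono := wbar_Q_monotone iter rho0 cvx_th cvx_X sym_P cvx_thm cvx_Xm sym_Pm k.
rewrite -mulmxA [H *m M]Hmx_mul_Mmx // bf_mulmx Md ipDl qf_symmetrize.
lra.
Qed.
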